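(* Let $F$ be a face of $V^c_O$ and let $\lambda\ne\mu$ be elements of $\Upsilon_1$ with $F\subseteq K_\lambda\cap K_\mu$. Then $\mathrm{supp}(\lambda)$ and $\mathrm{supp}(\mu)$ are consistent in their orientations: there is no oriented edge $e$ with $e\in\mathrm{supp}(\lambda)$ and $\bar e\in\mathrm{supp}(\mu)$.
   Context: $G=(V,E)$ is a finite connected graph; each edge gives oriented edges $e,\bar e$. Real $1$-cochains are $x$ on oriented edges with $x_{\bar e}=-x_e$, $\langle x,y\rangle=\sum_{e\in E}x_ey_e$, $q(x)=\langle x,x\rangle$. For $f:V\to\mathbb R$, $d(f)(e)=f(\text{head}(e))-f(\text{tail}(e))$; $K=d(\mathbb R^V)$ and $L=d(\mathbb Z^V)$. $V^c_O=\{x\in K: q(x)\le q(x-\mu)\ \forall\mu\in L\}$. $\mathrm{supp}(x)=\{e: x_e>0\}$. $\chi_C$ is the characteristic function of $C$; if $G[C]$ has $k$ and $G[V\setminus C]$ has $r$ connected components, $\kappa(C,V\setminus C)=k+r-1$, and $\Upsilon_1=\{d(\chi_C): \kappa(C,V\setminus C)=1\}$. For $\lambda\in\Upsilon_1$, $K_\lambda=\{x\in K: 2\langle x,\lambda\rangle=q(\lambda)\}$. *)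

From HB Require Import structures.
From mathcomp Require Import all_boot all_order all_algebra.
Set Implicit Arguments. Unset Strict Implicit. Unset Printing Implicit Defensive.
Import Order.TTheory GRing.Theory Num.Theory.
Local Open Scope ring_scope.

(* A finite (multi)graph: vertices V, edges E, each edge e carries a fixed
   reference orientation src e -> tgt e.  The oriented edges are E * bool:
   (e, true) is e with its reference orientation, (e, false) is \bar e. *)

Section Graph.
Variables (V E : finType) (src tgt : E -> V).

Definition adj : rel V := fun u v =>
  [exists e, ((src e == u) && (tgt e == v)) || ((src e == v) && (tgt e == u))].

Definition graph_connected : Prop := forall u v : V, connect adj u v.

Definition adjIn (C : {set V}) : rel V := fun u v =>
  [&& u \in C, v \in C & adj u v].

Definition ncomp (C : {set V}) : nat :=
  #| [set [set w in C | connect (adjIn C) u w] | u in C] |.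

Definition kappa (C : {set V}) : int := (ncomp C + ncomp (~: C))%:Z - 1.

Variable R : realFieldType.

(* real 1-cochains, given by their values on the reference orientations;
   the value on \bar e is minus the value on e *)
Definition cochain := E -> R.

Definition oval (x : cochain) (o : E * bool) : R :=
  if o.2 then x o.1 else - x o.1.

Definition orev (o : E * bool) : E * bool := (o.1, ~~ o.2).

Definition inner (x y : cochain) : R := \sum_(e : E) x e * y e.
Definition qf (x : cochain) : R := inner x x.

Definition dcob (f : V -> R) : cochain := fun e => f (tgt e) - f (src e).

Definition inK (x : cochain) : Prop := exists f : V -> R, x = dcob f.
Definition inL (x : cochain) : Prop :=
  exists f : V -> int, x = dcob (fun v => (f v)%:~R).

Definition VcO (x : cochain) : Prop :=
  inK x /\ forall mu : cochain, inL mu -> qf x <= qf (fun e => x e - mu e).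

Definition supp (x : cochain) (o : E * bool) : Prop := 0 < oval x o.

Definition chi (C : {set V}) : V -> R := fun v => if v \in C then 1 else 0.

Definition Upsilon1 (lam : cochain) : Prop :=
  exists C : {set V}, kappa C = 1 /\ lam = dcob (chi C).

Definition Klam (lam x : cochain) : Prop :=
  inK x /\ 2 * inner x lam = qf lam.

Definition is_face (F : cochain -> Prop) : Prop :=
  (exists x, F x) /\
  exists (a : cochain) (b : R),
    (forall x, VcO x -> inner a x <= b) /\
    (forall x, F x <-> (VcO x /\ inner a x = b)).

End Graph.

From Stdlib Require Import FunctionalExtensionality.
From HB Require Import structures.
From mathcomp Require Import all_boot all_order all_algebra.
From mathcomp Require Import lra.
Set Implicit Arguments. Unset Strict Implicit. Unset Printing Implicit Defensive.
Import Order.TTheory GRing.Theory Num.Theory.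
Local Open Scope ring_scope.

(* Let x lie in V^c_O on the facets of the cuts d chi_C and d chi_D.  The
   cuts d chi_(C :&: D) and d chi_(C :|: D) have the same sum, so
   2<x, d chi_(C :&: D)> + 2<x, d chi_(C :|: D)> = q(d chi_C) + q(d chi_D).
   The cut norm is submodular, strictly so when some edge is crossed in
   opposite directions by the two cuts; then one of the lattice points
   d chi_(C :&: D), d chi_(C :|: D) violates the Voronoi inequality
   2<x, m> <= q(m). *)

Section Cochains.
Variables (V E : finType) (src tgt : E -> V) (R : realFieldType).

Lemma inL_dcob_chi (C : {set V}) : inL src tgt (dcob src tgt (chi R C)).
Proof.
exists (fun v => if v \in C then 1%Z else 0%Z).
congr (dcob _ _); apply: functional_extensionality => v.
by rewrite /chi; case: (_ \in C).
Qed.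

Lemma VcO_inner_le (x m : cochain E R) :
  VcO src tgt x -> inL src tgt m -> 2 * inner x m <= qf m.
Proof.
move=> [_ Hx] /Hx; rewrite /qf /inner.
have -> : \sum_e (x e - m e) * (x e - m e) =
   \sum_e (x e * x e) - 2 * \sum_e (x e * m e) + \sum_e (m e * m e).
  rewrite mulr_sumr -sumrB -big_split /=; apply: eq_bigr => e _.
  by rewrite -!expr2 sqrrB mulr_natl.
by rewrite -addrA lerDl addrC subr_ge0.
Qed.

Lemma supp_orev_mul_lt0 (x y : cochain E R) (o : E * bool) :
  supp x o -> supp y (orev o) -> x o.1 * y o.1 < 0.
Proof.
rewrite /supp /oval /orev; case: o => e [] /=.
  by move=> x_gt0; rewrite oppr_gt0 pmulr_rlt0.
by rewrite oppr_gt0 mulrC => x_lt0 y_gt0; rewrite pmulr_rlt0.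
Qed.

End Cochains.

Section CutSubmodularity.
Variables (V E : finType) (src tgt : E -> V) (R : realFieldType) (C D : {set V}).

Local Notation cut A := (dcob src tgt (chi R A)).

Lemma dcob_chiIU_add e : cut (C :&: D) e + cut (C :|: D) e = cut C e + cut D e.
Proof.
rewrite /dcob /chi !in_setI !in_setU.
by case: (tgt e \in C) (src e \in C) (tgt e \in D) (src e \in D) => [] [] [] [] /=; lra.
Qed.

Lemma dcob_chiIU_sqr_le e :
  cut (C :&: D) e * cut (C :&: D) e + cut (C :|: D) e * cut (C :|: D) e
  <= cut C e * cut C e + cut D e * cut D e.
Proof.
rewrite /dcob /chi !in_setI !in_setU.
by case: (tgt e \in C) (src e \in C) (tgt e \in D) (src e \in D) => [] [] [] [] /=; lra.
Qed.

Lemma dcob_chiIU_sqr_lt e : cut C e * cut D e < 0 ->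
  cut (C :&: D) e * cut (C :&: D) e + cut (C :|: D) e * cut (C :|: D) e
  < cut C e * cut C e + cut D e * cut D e.
Proof.
rewrite /dcob /chi !in_setI !in_setU.
by case: (tgt e \in C) (src e \in C) (tgt e \in D) (src e \in D) => [] [] [] [] /=; lra.
Qed.

Lemma inner_chiIU (x : cochain E R) :
  inner x (cut (C :&: D)) + inner x (cut (C :|: D))
  = inner x (cut C) + inner x (cut D).
Proof.
rewrite /inner -!big_split /=; apply: eq_bigr => e _.
by rewrite -!mulrDr dcob_chiIU_add.
Qed.

Lemma qf_chiIU_lt e0 : cut C e0 * cut D e0 < 0 ->
  qf (cut (C :&: D)) + qf (cut (C :|: D)) < qf (cut C) + qf (cut D).
Proof.
move=> opp_e0; rewrite /qf /inner -!big_split /=.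
rewrite (bigD1 e0) //= [X in _ < X](bigD1 e0) //=.
apply: ltr_leD; first exact: dcob_chiIU_sqr_lt.
by apply: ler_sum => e _; apply: dcob_chiIU_sqr_le.
Qed.

Lemma VcO_cut_facets_consistent (x : cochain E R) :
  VcO src tgt x ->
  2 * inner x (cut C) = qf (cut C) -> 2 * inner x (cut D) = qf (cut D) ->
  ~ (exists o : E * bool, supp (cut C) o /\ supp (cut D) (orev o)).
Proof.
move=> Vx facetC facetD [o [suppC suppD]].
have /qf_chiIU_lt := supp_orev_mul_lt0 suppC suppD.
apply/negP; rewrite -leNgt.
rewrite -facetC -facetD -mulrDr -inner_chiIU mulrDr.
by apply: lerD; apply: VcO_inner_le Vx (inL_dcob_chi src tgt R _).
Qed.

End CutSubmodularity.

Theorem mainTheorem17 (V E : finType) (src tgt : E -> V) (R : realFieldType)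
  (Hconn : graph_connected src tgt)
  (F : cochain E R -> Prop) (HF : is_face src tgt F)
  (lam mu : cochain E R)
  (Hlam : Upsilon1 src tgt lam) (Hmu : Upsilon1 src tgt mu) (Hne : lam <> mu)
  (HFsub : forall x, F x -> Klam src tgt lam x /\ Klam src tgt mu x) :
  ~ (exists o : E * bool, supp lam o /\ supp mu (orev o)).
Proof.
have [[x Fx] [a [b [_ faceE]]]] := HF.
have [Vx _] := (faceE x).1 Fx.
have [[_ facet_lam] [_ facet_mu]] := HFsub x Fx.
have [C [_ def_lam]] := Hlam; have [D [_ def_mu]] := Hmu.
subst lam mu; exact: VcO_cut_facets_consistent Vx facet_lam facet_mu.
Qed.
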